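(* There exists $\varepsilon_0>0$ such that for every $\varepsilon\in(0,\varepsilon_0)$ the following holds. Let $\mathbf{U}$ be the $7\times 7$ matrix $$\mathbf{U}=\begin{pmatrix} 0 & -1 & \varepsilon & -10 & -\tfrac13+\varepsilon & -\tfrac13+\varepsilon & -\tfrac13+\varepsilon\\ \varepsilon & 0 & -1 & -10 & -\tfrac13+\varepsilon & -\tfrac13+\varepsilon & -\tfrac13+\varepsilon\\ -1 & \varepsilon & 0 & -10 & -\tfrac13+\varepsilon & -\tfrac13+\varepsilon & -\tfrac13+\varepsilon\\ -2 & -2 & 2 & 0 & -\tfrac13 & -\tfrac13 & -\tfrac13\\ -\tfrac13 & -\tfrac13 & -\tfrac13 & 10 & 0 & -1 & \varepsilon\\ -\tfrac13 & -\tfrac13 & -\tfrac13 & 10 & \varepsilon & 0 & -1\\ -\tfrac13 & -\tfrac13 & -\tfrac13 & 10 & -1 & \varepsilon & 0 \end{pmatrix}.$$ Then the set $\Gamma_{567}=\{\mathbf{x}\in S_7: x_5+x_6+x_7=1 \text{ and } x_5x_6x_7=0\}$ is asymptotically stable for the replicator dynamics $\dot x_i=x_i[(\mathbf{U}\mathbf{x})_i-\mathbf{x}\cdot\mathbf{U}\mathbf{x}]$, $i=1,\dots,7$, on $S_7$.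
   Context: $S_7=\{\mathbf{x}\in\mathbb{R}_+^7:\sum_i x_i=1\}$, which is invariant under the replicator dynamics. A compact invariant set is asymptotically stable if it is Lyapunov stable (every neighborhood contains a neighborhood whose forward orbits stay in the first) and attracting (all solutions starting in some neighborhood converge to it). The paper assumes throughout that $\varepsilon>0$ is ''small enough''. *)

From Stdlib Require Import Reals Lra.
From Coquelicot Require Import Coquelicot.
Open Scope R_scope.

(* Vectors of R^7 are represented as functions nat -> R; only indices
   0..6 are relevant (paper index i corresponds to Rocq index i-1). *)

Definition Umat (eps : R) (i j : nat) : R :=
  match i, j with
  | 0%nat, 0%nat => 0 | 0%nat, 1%nat => -1 | 0%nat, 2%nat => eps
  | 0%nat, 3%nat => -10
  | 0%nat, _ => -1/3 + eps
  | 1%nat, 0%nat => eps | 1%nat, 1%nat => 0 | 1%nat, 2%nat => -1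
  | 1%nat, 3%nat => -10
  | 1%nat, _ => -1/3 + eps
  | 2%nat, 0%nat => -1 | 2%nat, 1%nat => eps | 2%nat, 2%nat => 0
  | 2%nat, 3%nat => -10
  | 2%nat, _ => -1/3 + eps
  | 3%nat, 0%nat => -2 | 3%nat, 1%nat => -2 | 3%nat, 2%nat => 2
  | 3%nat, 3%nat => 0
  | 3%nat, _ => -1/3
  | 4%nat, 3%nat => 10
  | 4%nat, 4%nat => 0 | 4%nat, 5%nat => -1 | 4%nat, 6%nat => eps
  | 4%nat, _ => -1/3
  | 5%nat, 3%nat => 10
  | 5%nat, 4%nat => eps | 5%nat, 5%nat => 0 | 5%nat, 6%nat => -1
  | 5%nat, _ => -1/3
  | 6%nat, 3%nat => 10
  | 6%nat, 4%nat => -1 | 6%nat, 5%nat => eps | 6%nat, 6%nat => 0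
  | 6%nat, _ => -1/3
  | _, _ => 0
  end.

Definition Ux (eps : R) (x : nat -> R) (i : nat) : R :=
  sum_f_R0 (fun j => Umat eps i j * x j) 6.

Definition avg_payoff (eps : R) (x : nat -> R) : R :=
  sum_f_R0 (fun i => x i * Ux eps x i) 6.

Definition replicator (eps : R) (x : nat -> R) (i : nat) : R :=
  x i * (Ux eps x i - avg_payoff eps x).

Definition simplex7 (x : nat -> R) : Prop :=
  (forall i, (i < 7)%nat -> 0 <= x i) /\ sum_f_R0 x 6 = 1.

Definition Gamma567 (x : nat -> R) : Prop :=
  simplex7 x /\ x 4%nat + x 5%nat + x 6%nat = 1 /\ x 4%nat * x 5%nat * x 6%nat = 0.

Definition dist7 (x y : nat -> R) : R :=
  sqrt (sum_f_R0 (fun i => (x i - y i)^2) 6).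

Definition nbhd_in_S7 (A N : (nat -> R) -> Prop) : Prop :=
  forall y, A y -> exists r, 0 < r /\
    forall z, simplex7 z -> dist7 y z < r -> N z.

Definition replicator_solution (eps : R) (x : R -> nat -> R) : Prop :=
  (forall t, 0 < t -> forall i, (i < 7)%nat ->
     is_derive (fun s => x s i) t (replicator eps (x t) i)) /\
  (forall i, (i < 7)%nat ->
     filterlim (fun s => x s i) (at_right 0) (locally (x 0 i))).

Definition lyapunov_stable (eps : R) (A : (nat -> R) -> Prop) : Prop :=
  forall V, nbhd_in_S7 A V ->
    exists W, nbhd_in_S7 A W /\
      (forall z, simplex7 z -> W z -> V z) /\
      forall x, replicator_solution eps x -> simplex7 (x 0) -> W (x 0) ->
        forall t, 0 <= t -> V (x t).

Definition converges_to_set (x : R -> nat -> R) (A : (nat -> R) -> Prop) : Prop :=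
  forall e, 0 < e -> exists T, forall t, T <= t ->
    exists y, A y /\ dist7 (x t) y < e.

Definition attracting (eps : R) (A : (nat -> R) -> Prop) : Prop :=
  exists W, nbhd_in_S7 A W /\
    forall x, replicator_solution eps x -> simplex7 (x 0) -> W (x 0) ->
      converges_to_set x A.

Definition asymptotically_stable (eps : R) (A : (nat -> R) -> Prop) : Prop :=
  lyapunov_stable eps A /\ attracting eps A.

(* L(x) = x1 + x2 + x3 + x4 + x5 x6 x7 is nonnegative on S_7 and vanishes exactly on Gamma_567.
   Where L < 10^-4 and eps <= 1/200, one has x5 x6 + x6 x7 + x7 x5 <= 3/10, hence every payoff gap
   (Ux)_i - x.Ux with i <= 4 and the sum of the gaps with i = 5, 6, 7 are at most -1/50; so along
   the replicator flow L' <= -L/50 and L(x(t)) <= e^(-t/50) L(x(0)).  Conversely a point of S_7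
   with small L is within squared distance 9 L of Gamma_567 (move the off-edge mass onto the
   nearest edge), and by compactness every neighbourhood of Gamma_567 contains a uniform tube around
   it.  Solutions are not assumed to stay in S_7:
   invariance of the simplex is proved together with the decay estimate by continuous induction,
   using Gronwall's lemma for sum x_i = 1 and for vanishing coordinates. *)

From Stdlib Require Import Reals.
From Coquelicot Require Import Coquelicot.
From Stdlib Require Import Lra Psatz Classical IndefiniteDescription.
Open Scope R_scope.

Lemma ball_R_bounds (x e y : R) : ball x e y -> x - e < y < x + e.
Proof. intros H. change (Rabs (y - x) < e) in H. apply Rabs_def2 in H. lra. Qed.

Section RealLimits.

Context {T : Type} (F : (T -> Prop) -> Prop) {FF : Filter F}.

Lemma filterlim_Rplus (f g : T -> R) (a b : R) :
  filterlim f F (locally a) -> filterlim g F (locally b) ->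
  filterlim (fun s => f s + g s) F (locally (a + b)).
Proof. intros Hf Hg. exact (filterlim_comp_2 f g Rplus Hf Hg (filterlim_plus a b)). Qed.

Lemma filterlim_Rmult (f g : T -> R) (a b : R) :
  filterlim f F (locally a) -> filterlim g F (locally b) ->
  filterlim (fun s => f s * g s) F (locally (a * b)).
Proof. intros Hf Hg. exact (filterlim_comp_2 f g Rmult Hf Hg (filterlim_mult a b)). Qed.

Lemma filterlim_sum_f_R0 (f : T -> nat -> R) (l : nat -> R) n :
  (forall i, (i <= n)%nat -> filterlim (fun s => f s i) F (locally (l i))) ->
  filterlim (fun s => sum_f_R0 (f s) n) F (locally (sum_f_R0 l n)).
Proof.
  induction n as [|n IH]; intros H; simpl; [apply H; lia|].
  apply filterlim_Rplus; [apply IH; intros; apply H|apply H]; lia.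
Qed.

Lemma filter_forall_lt (P : nat -> T -> Prop) n :
  (forall i, (i < n)%nat -> F (P i)) -> F (fun s => forall i, (i < n)%nat -> P i s).
Proof.
  induction n as [|n IH]; intros H.
  - apply filter_forall. intros s i Hi; lia.
  - apply (filter_imp (fun s => (forall i, (i < n)%nat -> P i s) /\ P n s)).
    + intros s [H1 H2] i Hi. destruct (Nat.eq_dec i n) as [->|]; auto. apply H1; lia.
    + apply filter_and; [apply IH; intros|]; apply H; lia.
Qed.

Lemma filterlim_eventually_lt (f : T -> R) (l m : R) :
  filterlim f F (locally l) -> l < m -> F (fun s => f s < m).
Proof.
  intros Hf Hlm. apply filterlim_locally with (eps := mkposreal (m - l) ltac:(lra)) in Hf.
  eapply filter_imp; [|exact Hf]. intros s Hs. apply ball_R_bounds in Hs. cbn in Hs. lra.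
Qed.

Lemma filterlim_eventually_gt (f : T -> R) (l m : R) :
  filterlim f F (locally l) -> m < l -> F (fun s => m < f s).
Proof.
  intros Hf Hlm. apply filterlim_locally with (eps := mkposreal (l - m) ltac:(lra)) in Hf.
  eapply filter_imp; [|exact Hf]. intros s Hs. apply ball_R_bounds in Hs. cbn in Hs. lra.
Qed.

End RealLimits.

Section ProperLimits.

Context {T : Type} (F : (T -> Prop) -> Prop) {FF : ProperFilter F}.

Lemma filterlim_le (f : T -> R) (l m : R) :
  filterlim f F (locally l) -> F (fun s => f s <= m) -> l <= m.
Proof.
  intros Hf Hle. apply Rnot_lt_le. intros Hlt.
  destruct (filter_ex _ (filter_and _ _ Hle (filterlim_eventually_gt F f l m Hf Hlt))) as [s Hs]. lra.
Qed.

Lemma filterlim_ge (f : T -> R) (l m : R) :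
  filterlim f F (locally l) -> F (fun s => m <= f s) -> m <= l.
Proof.
  intros Hf Hge. apply Rnot_lt_le. intros Hlt.
  destruct (filter_ex _ (filter_and _ _ Hge (filterlim_eventually_lt F f l m Hf Hlt))) as [s Hs]. lra.
Qed.

End ProperLimits.

Lemma at_left_interval (t : R) : 0 < t -> at_left t (fun s => 0 <= s < t).
Proof.
  intros Ht. exists (mkposreal t Ht). intros s Hs Hlt. apply ball_R_bounds in Hs. cbn in Hs. lra.
Qed.

Lemma at_right_interval (t d : R) : 0 < d -> at_right t (fun s => t < s < t + d).
Proof.
  intros Hd. exists (mkposreal d Hd). intros s Hs Hlt. apply ball_R_bounds in Hs. cbn in Hs. lra.
Qed.

Lemma at_right_ex_interval (t : R) (P : R -> Prop) :
  at_right t P -> exists d, 0 < d /\ forall s, t < s < t + d -> P s.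
Proof.
  intros [e He]. exists e. split; [apply cond_pos|]. intros s Hs. apply He; [|lra].
  change (Rabs (s - t) < e). apply Rabs_def1; lra.
Qed.

Lemma filterlim_within_of_locally (f : R -> R) (t l : R) (P : R -> Prop) :
  filterlim f (locally t) (locally l) -> filterlim f (within P (locally t)) (locally l).
Proof. intros H. eapply filterlim_filter_le_1; [apply filter_le_within|exact H]. Qed.

Lemma is_derive_continuous (f : R -> R) (t l : R) :
  is_derive f t l -> filterlim f (locally t) (locally (f t)).
Proof. intros H. apply (ex_derive_continuous f t). exists l. exact H. Qed.

Lemma is_derive_Rmult (f g : R -> R) (t df dg : R) :
  is_derive f t df -> is_derive g t dg ->
  is_derive (fun s => f s * g s) t (df * g t + f t * dg).
Proof. intros Hf Hg. exact (is_derive_mult f g t df dg Hf Hg Rmult_comm). Qed.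

Lemma is_derive_sum_f_R0 (f : R -> nat -> R) (df : nat -> R) (t : R) n :
  (forall i, (i <= n)%nat -> is_derive (fun s => f s i) t (df i)) ->
  is_derive (fun s => sum_f_R0 (f s) n) t (sum_f_R0 df n).
Proof.
  induction n as [|n IH]; intros H; simpl; [apply H; lia|].
  apply (is_derive_plus (fun s => sum_f_R0 (f s) n) (fun s => f s (S n)));
    [apply IH; intros|]; apply H; lia.
Qed.

Lemma is_derive_exp_scal (k t : R) : is_derive (fun s => exp (k * s)) t (k * exp (k * t)).
Proof. auto_derive; [exact I|ring]. Qed.

Lemma nonpos_derive_le_right_limit (v dv : R -> R) (a b l : R) :
  (forall s, a < s < b -> is_derive v s (dv s)) -> (forall s, a < s < b -> dv s <= 0) ->
  filterlim v (at_right a) (locally l) -> forall s, a < s < b -> v s <= l.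
Proof.
  intros Hd Hneg Hl s Hs. apply Rnot_lt_le. intros Hlt.
  assert (Hsa : 0 < s - a) by lra.
  destruct (filter_ex _ (filter_and _ _ (at_right_interval a (s - a) Hsa)
              (filterlim_eventually_lt _ v l (v s) Hl Hlt))) as [a' [Ha' Hva']].
  assert (Hmin : Rmin a' s = a') by (apply Rmin_left; lra).
  assert (Hmax : Rmax a' s = s) by (apply Rmax_right; lra).
  destruct (MVT_gen v a' s dv) as [c [Hc Heq]]; rewrite ?Hmin, ?Hmax in *.
  - intros y Hy. apply Hd. lra.
  - intros y Hy. apply continuity_pt_filterlim, (is_derive_continuous v y (dv y)), Hd. lra.
  - assert (dv c * (s - a') <= 0) by (assert (dv c <= 0) by (apply Hneg; lra); nra). lra.
Qed.

Lemma gronwall_zero (u du : R -> R) (t d K : R) :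
  (forall s, t < s < t + d -> is_derive u s (du s)) ->
  (forall s, t < s < t + d -> du s <= K * u s) ->
  (forall s, t < s < t + d -> 0 <= u s) ->
  filterlim u (at_right t) (locally 0) -> forall s, t < s < t + d -> u s = 0.
Proof.
  intros Hder Hle Hpos Hlim s Hs.
  assert (Hv : forall s, t < s < t + d -> u s * exp (- K * s) <= 0 * exp (- K * t)).
  { apply (nonpos_derive_le_right_limit _ (fun s => du s * exp (- K * s) + u s * (- K * exp (- K * s)))).
    - intros y Hy. apply (is_derive_Rmult u (fun s => exp (- K * s)));
        [apply Hder; exact Hy|apply is_derive_exp_scal].
    - intros y Hy. pose proof (Hle y Hy). pose proof (exp_pos (- K * y)). nra.
    - apply (filterlim_Rmult _ u); [exact Hlim|].
      apply filterlim_within_of_locally, (is_derive_continuous _ _ _ (is_derive_exp_scal (- K) t)). }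
  pose proof (Hv s Hs). pose proof (Hpos s Hs). pose proof (exp_pos (- K * s)). nra.
Qed.

Lemma continuous_induction (P : R -> Prop) :
  (forall t, 0 <= t -> (forall s, 0 <= s < t -> P s) ->
     exists d, 0 < d /\ forall s, t <= s < t + d -> P s) ->
  forall t, 0 <= t -> P t.
Proof.
  intros Hext t0 Ht0. apply NNPP. intros Hn.
  set (E := fun t => 0 <= t /\ forall s, 0 <= s < t -> P s).
  assert (HB : bound E).
  { exists t0. intros t [Ht HP]. apply Rnot_lt_le. intros Hlt. apply Hn, HP. lra. }
  assert (HE : exists t, E t) by (exists 0; split; [lra|intros; lra]).
  destruct (completeness E HB HE) as [m [Hub Hlub]].
  assert (Hbelow : forall s, 0 <= s < m -> P s).
  { intros s Hs. apply NNPP. intros HPs.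
    assert (Hs' : is_upper_bound E s).
    { intros t [Ht HP]. apply Rnot_lt_le. intros Hlt. apply HPs, HP. lra. }
    pose proof (Hlub s Hs'). lra. }
  assert (Hm0 : 0 <= m) by (apply Hub; split; [lra|intros; lra]).
  destruct (Hext m Hm0 Hbelow) as [d [Hd Hd']].
  assert (Hmd : E (m + d)).
  { split; [lra|]. intros s Hs. destruct (Rlt_or_le s m); [apply Hbelow|apply Hd']; lra. }
  pose proof (Hub _ Hmd). lra.
Qed.

(** * Payoffs and the Lyapunov function *)

Lemma pairwise_products_le_min (p q r : R) : 0 <= r -> r <= p -> r <= q -> p + q + r <= 1 ->
  p * q * r <= 1/10000 -> p * q + q * r + r * p <= 3/10.
Proof.
  intros Hr Hp Hq Hs Hprod.
  destruct (Rle_or_lt r (1/20)) as [Hr1|Hr1].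
  - assert (p * q <= (p + q)^2 / 4) by (pose proof (pow2_ge_0 (p - q)); nra).
    assert (r * (p + q) <= r) by nra. nra.
  - assert (p * q >= r * r) by nra. assert (p * q * r >= r * r * r) by nra. nra.
Qed.

Lemma pairwise_products_le (p q r : R) : 0 <= p -> 0 <= q -> 0 <= r -> p + q + r <= 1 ->
  p * q * r <= 1/10000 -> p * q + q * r + r * p <= 3/10.
Proof.
  intros Hp Hq Hr Hs Hprod.
  destruct (Rle_or_lt r p); destruct (Rle_or_lt r q); destruct (Rle_or_lt p q).
  all: first
    [ apply pairwise_products_le_min; lra
    | replace (p*q+q*r+r*p) with (q*r+r*p+p*q) by ring; apply pairwise_products_le_min; nra
    | replace (p*q+q*r+r*p) with (r*p+p*q+q*r) by ring; apply pairwise_products_le_min; nra ].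
Qed.

Lemma Ux_0 eps x : Ux eps x 0 =
  - x 1%nat + eps * x 2%nat - 10 * x 3%nat + (-1/3 + eps) * (x 4%nat + x 5%nat + x 6%nat).
Proof. unfold Ux; simpl. field. Qed.
Lemma Ux_1 eps x : Ux eps x 1 =
  eps * x 0%nat - x 2%nat - 10 * x 3%nat + (-1/3 + eps) * (x 4%nat + x 5%nat + x 6%nat).
Proof. unfold Ux; simpl. field. Qed.
Lemma Ux_2 eps x : Ux eps x 2 =
  - x 0%nat + eps * x 1%nat - 10 * x 3%nat + (-1/3 + eps) * (x 4%nat + x 5%nat + x 6%nat).
Proof. unfold Ux; simpl. field. Qed.
Lemma Ux_3 eps x : Ux eps x 3 =
  -2 * x 0%nat - 2 * x 1%nat + 2 * x 2%nat - 1/3 * (x 4%nat + x 5%nat + x 6%nat).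
Proof. unfold Ux; simpl. field. Qed.
Lemma Ux_4 eps x : Ux eps x 4 =
  -1/3 * (x 0%nat + x 1%nat + x 2%nat) + 10 * x 3%nat - x 5%nat + eps * x 6%nat.
Proof. unfold Ux; simpl. field. Qed.
Lemma Ux_5 eps x : Ux eps x 5 =
  -1/3 * (x 0%nat + x 1%nat + x 2%nat) + 10 * x 3%nat + eps * x 4%nat - x 6%nat.
Proof. unfold Ux; simpl. field. Qed.
Lemma Ux_6 eps x : Ux eps x 6 =
  -1/3 * (x 0%nat + x 1%nat + x 2%nat) + 10 * x 3%nat - x 4%nat + eps * x 5%nat.
Proof. unfold Ux; simpl. field. Qed.

Lemma avg_payoff_expl eps x : avg_payoff eps x =
  x 0%nat * Ux eps x 0 + x 1%nat * Ux eps x 1 + x 2%nat * Ux eps x 2 + x 3%nat * Ux eps x 3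
  + x 4%nat * Ux eps x 4 + x 5%nat * Ux eps x 5 + x 6%nat * Ux eps x 6.
Proof. unfold avg_payoff; simpl. ring. Qed.

Lemma simplex7_expl x : simplex7 x ->
  0 <= x 0%nat /\ 0 <= x 1%nat /\ 0 <= x 2%nat /\ 0 <= x 3%nat /\
  0 <= x 4%nat /\ 0 <= x 5%nat /\ 0 <= x 6%nat /\
  x 0%nat + x 1%nat + x 2%nat + x 3%nat + x 4%nat + x 5%nat + x 6%nat = 1.
Proof. intros [Hn Hs]. simpl in Hs. repeat split; try (apply Hn; lia). lra. Qed.

Definition lyap (x : nat -> R) : R :=
  x 0%nat + x 1%nat + x 2%nat + x 3%nat + x 4%nat * x 5%nat * x 6%nat.

Lemma lyap_nonneg x : simplex7 x -> 0 <= lyap x.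
Proof.
  intros Hx. destruct (simplex7_expl x Hx) as (H0 & H1 & H2 & H3 & H4 & H5 & H6 & _).
  assert (0 <= x 4%nat * x 5%nat * x 6%nat) by (apply Rmult_le_pos; [apply Rmult_le_pos|]; lra).
  unfold lyap. lra.
Qed.

Definition lyap_derivative (eps : R) (x : nat -> R) : R :=
  let f := replicator eps x in
  f 0%nat + f 1%nat + f 2%nat + f 3%nat
  + ((f 4%nat * x 5%nat + x 4%nat * f 5%nat) * x 6%nat + x 4%nat * x 5%nat * f 6%nat).

Lemma Ux_ge_neg_half eps x i : 0 < eps <= 1/200 -> simplex7 x -> lyap x < 1/10000 ->
  (i < 4)%nat -> -1/2 <= Ux eps x i.
Proof.
  intros He Hx HL Hi. destruct (simplex7_expl x Hx) as (H0 & H1 & H2 & H3 & H4 & H5 & H6 & Hs).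
  assert (Hpqr : 0 <= x 4%nat * x 5%nat * x 6%nat)
    by (apply Rmult_le_pos; [apply Rmult_le_pos|]; lra).
  unfold lyap in HL.
  assert (HeF : 0 <= eps * (x 4%nat + x 5%nat + x 6%nat)) by (apply Rmult_le_pos; lra).
  assert (He0 : 0 <= eps * x 0%nat) by (apply Rmult_le_pos; lra).
  assert (He1 : 0 <= eps * x 1%nat) by (apply Rmult_le_pos; lra).
  assert (He2 : 0 <= eps * x 2%nat) by (apply Rmult_le_pos; lra).
  destruct i as [|[|[|[|i]]]]; try lia; rewrite ?Ux_0, ?Ux_1, ?Ux_2, ?Ux_3; lra.
Qed.

Lemma avg_payoff_lower_bound eps x : 0 < eps <= 1/200 -> simplex7 x -> lyap x < 1/10000 ->
  -(1 - eps) * (x 4%nat * x 5%nat + x 5%nat * x 6%nat + x 6%nat * x 4%nat)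
  - 5/6 * (x 0%nat + x 1%nat + x 2%nat + x 3%nat) <= avg_payoff eps x.
Proof.
  intros He Hx HL. destruct (simplex7_expl x Hx) as (H0 & H1 & H2 & H3 & H4 & H5 & H6 & Hs).
  assert (Hmul : forall i, (i < 4)%nat -> - x i / 2 <= x i * Ux eps x i).
  { intros i Hi. pose proof (Ux_ge_neg_half eps x i He Hx HL Hi).
    assert (0 <= x i * (Ux eps x i + 1/2)) by (apply Rmult_le_pos; [apply (proj1 Hx); lia|lra]).
    lra. }
  set (F := x 4%nat + x 5%nat + x 6%nat).
  assert (H456 : x 4%nat * Ux eps x 4 + x 5%nat * Ux eps x 5 + x 6%nat * Ux eps x 6 =
    -(1 - eps) * (x 4%nat * x 5%nat + x 5%nat * x 6%nat + x 6%nat * x 4%nat)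
    + 10 * (F * x 3%nat) - 1/3 * (F * (x 0%nat + x 1%nat + x 2%nat)))
    by (rewrite Ux_4, Ux_5, Ux_6; unfold F; field).
  assert (HF3 : 0 <= F * x 3%nat) by (apply Rmult_le_pos; unfold F; lra).
  assert (HF012 : F * (x 0%nat + x 1%nat + x 2%nat) <= x 0%nat + x 1%nat + x 2%nat).
  { assert (0 <= (1 - F) * (x 0%nat + x 1%nat + x 2%nat)) by (apply Rmult_le_pos; unfold F; lra).
    lra. }
  rewrite avg_payoff_expl.
  pose proof (Hmul 0%nat ltac:(lia)). pose proof (Hmul 1%nat ltac:(lia)).
  pose proof (Hmul 2%nat ltac:(lia)). pose proof (Hmul 3%nat ltac:(lia)).
  lra.
Qed.

Lemma payoff_gaps eps x : 0 < eps <= 1/200 -> simplex7 x -> lyap x < 1/10000 ->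
  (forall i, (i < 4)%nat -> Ux eps x i - avg_payoff eps x <= -1/50) /\
  Ux eps x 4 + Ux eps x 5 + Ux eps x 6 - 3 * avg_payoff eps x <= -1/50.
Proof.
  intros He Hx HL. pose proof (avg_payoff_lower_bound eps x He Hx HL) as Havg.
  destruct (simplex7_expl x Hx) as (H0 & H1 & H2 & H3 & H4 & H5 & H6 & Hs).
  unfold lyap in HL.
  assert (Hpqr : 0 <= x 4%nat * x 5%nat * x 6%nat)
    by (apply Rmult_le_pos; [apply Rmult_le_pos|]; lra).
  remember (x 0%nat + x 1%nat + x 2%nat + x 3%nat) as m eqn:Hm.
  remember (x 4%nat * x 5%nat + x 5%nat * x 6%nat + x 6%nat * x 4%nat) as P eqn:HPdef.
  assert (HP : 0 <= P <= 3/10).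
  { split; [rewrite HPdef; repeat apply Rplus_le_le_0_compat; apply Rmult_le_pos; lra|].
    rewrite HPdef. apply pairwise_products_le; lra. }
  assert (HeP : 0 <= eps * P <= P) by (split; [apply Rmult_le_pos|]; nra).
  assert (Hem : 0 <= eps * m <= eps * (1/10000))
    by (split; [apply Rmult_le_pos|apply Rmult_le_compat_l]; lra).
  assert (HeF : eps * (x 4%nat + x 5%nat + x 6%nat) = eps - eps * m)
    by (replace (x 4%nat + x 5%nat + x 6%nat) with (1 - m) by lra; ring).
  assert (Hel : forall j, (j < 3)%nat -> 0 <= eps * x j <= eps * m).
  { intros j Hj.
    split; [apply Rmult_le_pos; [lra|apply (proj1 Hx); lia]|apply Rmult_le_compat_l; [lra|]].
    destruct j as [|[|[|j]]]; try lia; lra. }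
  pose proof (Hel 0%nat ltac:(lia)). pose proof (Hel 1%nat ltac:(lia)).
  pose proof (Hel 2%nat ltac:(lia)).
  assert (H3P : (1 - 1/200) * (1/10 - m) <= (1 - eps) * (x 4%nat + x 5%nat + x 6%nat - 3 * P))
    by (apply Rmult_le_compat; lra).
  split.
  - intros i Hi. destruct i as [|[|[|[|i]]]]; try lia;
      rewrite ?Ux_0, ?Ux_1, ?Ux_2, ?Ux_3; lra.
  - rewrite Ux_4, Ux_5, Ux_6. lra.
Qed.

Lemma lyap_derivative_le eps x : 0 < eps <= 1/200 -> simplex7 x -> lyap x < 1/10000 ->
  lyap_derivative eps x <= -(1/50) * lyap x.
Proof.
  intros He Hx HL. destruct (payoff_gaps eps x He Hx HL) as [G0123 G456].
  destruct (simplex7_expl x Hx) as (H0 & H1 & H2 & H3 & H4 & H5 & H6 & _).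
  set (g i := Ux eps x i - avg_payoff eps x) in *.
  replace (lyap_derivative eps x) with
    (x 0%nat * g 0%nat + x 1%nat * g 1%nat + x 2%nat * g 2%nat + x 3%nat * g 3%nat
     + x 4%nat * x 5%nat * x 6%nat * (g 4%nat + g 5%nat + g 6%nat))
    by (unfold lyap_derivative, replicator, g; ring).
  assert (Hg : g 4%nat + g 5%nat + g 6%nat <= -1/50) by (unfold g; lra).
  assert (Hgi : forall i, (i < 4)%nat -> g i <= -1/50) by exact G0123.
  clearbody g.
  assert (Hmul : forall u v, 0 <= u -> v <= -1/50 -> u * v <= -(1/50) * u)
    by (intros u v Hu Hv; assert (0 <= u * (-1/50 - v)) by (apply Rmult_le_pos; lra); lra).
  assert (Hp : 0 <= x 4%nat * x 5%nat * x 6%nat)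
    by (apply Rmult_le_pos; [apply Rmult_le_pos|]; lra).
  pose proof (Hmul _ _ H0 (Hgi 0%nat ltac:(lia))). pose proof (Hmul _ _ H1 (Hgi 1%nat ltac:(lia))).
  pose proof (Hmul _ _ H2 (Hgi 2%nat ltac:(lia))). pose proof (Hmul _ _ H3 (Hgi 3%nat ltac:(lia))).
  pose proof (Hmul _ _ Hp Hg).
  unfold lyap. lra.
Qed.

(** * Distance to Gamma_567 *)

Definition sqdist7 (y z : nat -> R) : R := sum_f_R0 (fun i => (y i - z i)^2) 6.

Lemma sqdist7_expl y z : sqdist7 y z =
  (y 0%nat - z 0%nat)^2 + (y 1%nat - z 1%nat)^2 + (y 2%nat - z 2%nat)^2 + (y 3%nat - z 3%nat)^2
  + (y 4%nat - z 4%nat)^2 + (y 5%nat - z 5%nat)^2 + (y 6%nat - z 6%nat)^2.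
Proof. reflexivity. Qed.

Lemma sqdist7_nonneg y z : 0 <= sqdist7 y z.
Proof.
  unfold sqdist7. apply cond_pos_sum. intros i. apply pow2_ge_0.
Qed.

Lemma sqdist7_sym y z : sqdist7 y z = sqdist7 z y.
Proof. rewrite !sqdist7_expl. ring. Qed.

Lemma sqdist7_le_2 u v w : sqdist7 u w <= 2 * sqdist7 v w + 2 * sqdist7 u v.
Proof.
  unfold sqdist7. eapply Rle_trans.
  - apply (sum_Rle _ (fun i => 2 * (v i - w i)^2 + 2 * (u i - v i)^2)). intros i _.
    pose proof (pow2_ge_0 (u i - 2 * v i + w i)). nra.
  - right. simpl. ring.
Qed.

Lemma dist7_lt_of_sqdist7 y z r : 0 < r -> sqdist7 y z < r^2 -> dist7 y z < r.
Proof.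
  intros Hr H. unfold dist7. fold (sqdist7 y z). rewrite <- (sqrt_pow2 r) by lra.
  apply sqrt_lt_1_alt. split; [apply sqdist7_nonneg|exact H].
Qed.

Lemma sqdist7_lt_of_dist7 y z r : dist7 y z < r -> sqdist7 y z < r^2.
Proof.
  intros H. unfold dist7 in H. fold (sqdist7 y z) in H.
  pose proof (sqdist7_nonneg y z). pose proof (sqrt_pos (sqdist7 y z)).
  rewrite <- (sqrt_sqrt (sqdist7 y z)) by lra. nra.
Qed.

Lemma Gamma567_expl y : Gamma567 y ->
  y 0%nat = 0 /\ y 1%nat = 0 /\ y 2%nat = 0 /\ y 3%nat = 0 /\
  0 <= y 4%nat /\ 0 <= y 5%nat /\ 0 <= y 6%nat /\ y 4%nat + y 5%nat + y 6%nat = 1 /\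
  (y 4%nat = 0 \/ y 5%nat = 0 \/ y 6%nat = 0).
Proof.
  intros [Hs [H1 H2]]. destruct (simplex7_expl y Hs) as (H0 & Ha & Hb & Hc & Hd & He & Hf & Hsum).
  repeat split; try lra.
  apply Rmult_integral in H2 as [H2|H2]; [apply Rmult_integral in H2|]; tauto.
Qed.

Lemma sqdist7_coord_le y z k : (k < 7)%nat -> (y k - z k)^2 <= sqdist7 y z.
Proof.
  intros Hk. assert (Hsq : forall l, 0 <= (y l - z l)^2) by (intros l; apply pow2_ge_0).
  pose proof (Hsq 0%nat). pose proof (Hsq 1%nat). pose proof (Hsq 2%nat). pose proof (Hsq 3%nat).
  pose proof (Hsq 4%nat). pose proof (Hsq 5%nat). pose proof (Hsq 6%nat).
  rewrite sqdist7_expl. destruct k as [|[|[|[|[|[|[|k]]]]]]]; try lia; lra.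
Qed.

Lemma lt_of_sq_lt (a b : R) : 0 <= b -> a^2 < b^2 -> a < b.
Proof.
  intros Hb H. destruct (Rlt_or_le a b) as [|Hba]; [assumption|].
  pose proof (pow_incr b a 2 (conj Hb Hba)). lra.
Qed.

Lemma lyap_lt_nbhd eta : 0 < eta <= 1 ->
  nbhd_in_S7 Gamma567 (fun z => simplex7 z /\ lyap z < eta).
Proof.
  intros He y Hy. exists (eta / 5). split; [lra|]. intros z Hz Hd.
  split; [exact Hz|]. apply sqdist7_lt_of_dist7 in Hd.
  destruct (Gamma567_expl y Hy) as (Y0 & Y1 & Y2 & Y3 & _ & _ & _ & _ & Yp).
  destruct (simplex7_expl z Hz) as (Z0 & Z1 & Z2 & Z3 & Z4 & Z5 & Z6 & Zs).
  assert (Hsmall : forall i, (i < 7)%nat -> y i = 0 -> z i < eta / 5).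
  { intros i Hi Hyi. apply lt_of_sq_lt; [lra|].
    pose proof (sqdist7_coord_le y z i Hi). rewrite Hyi in *.
    replace ((0 - z i)^2) with (z i ^ 2) in * by ring. lra. }
  assert (Hp : z 4%nat * z 5%nat * z 6%nat < eta / 5).
  { destruct Yp as [Yp|[Yp|Yp]].
    - pose proof (Hsmall 4%nat ltac:(lia) Yp).
      assert (0 <= z 5%nat * z 6%nat <= 1) by (split; [apply Rmult_le_pos|]; nra). nra.
    - pose proof (Hsmall 5%nat ltac:(lia) Yp).
      assert (0 <= z 4%nat * z 6%nat <= 1) by (split; [apply Rmult_le_pos|]; nra). nra.
    - pose proof (Hsmall 6%nat ltac:(lia) Yp).
      assert (0 <= z 4%nat * z 5%nat <= 1) by (split; [apply Rmult_le_pos|]; nra). nra. }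
  pose proof (Hsmall 0%nat ltac:(lia) Y0). pose proof (Hsmall 1%nat ltac:(lia) Y1).
  pose proof (Hsmall 2%nat ltac:(lia) Y2). pose proof (Hsmall 3%nat ltac:(lia) Y3).
  unfold lyap. lra.
Qed.

Definition edge (i j : nat) (s : R) : nat -> R :=
  fun k => if (k =? i)%nat then s else if (k =? j)%nat then 1 - s else 0.

(* [Gamma567] is the union of the edges [edge i j] of [S_7] along the 3-cycle [4 -> 5 -> 6 -> 4]. *)
Definition cyclic456 (i j k : nat) : Prop :=
  (i, j, k) = (4%nat, 5%nat, 6%nat) \/ (i, j, k) = (5%nat, 6%nat, 4%nat) \/
  (i, j, k) = (6%nat, 4%nat, 5%nat).

Lemma Gamma567_edge i j k s : cyclic456 i j k -> 0 <= s <= 1 -> Gamma567 (edge i j s).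
Proof.
  intros Hc Hs. split; [split|].
  - intros l Hl. destruct Hc as [Hc|[Hc|Hc]]; injection Hc as -> -> ->;
      destruct l as [|[|[|[|[|[|[|l]]]]]]]; try lia; cbn; lra.
  - destruct Hc as [Hc|[Hc|Hc]]; injection Hc as -> -> ->; cbn; ring.
  - destruct Hc as [Hc|[Hc|Hc]]; injection Hc as -> -> ->; cbn; split; ring.
Qed.

Lemma sqdist7_edge i j k s t : cyclic456 i j k ->
  sqdist7 (edge i j s) (edge i j t) = 2 * (s - t)^2.
Proof. intros Hc. destruct Hc as [Hc|[Hc|Hc]]; injection Hc as -> -> ->; cbn; ring. Qed.

Lemma Gamma567_on_edge y : Gamma567 y -> exists i j k, cyclic456 i j k /\ 0 <= y i <= 1 /\
  forall z, sqdist7 (edge i j (y i)) z = sqdist7 y z.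
Proof.
  intros Hy. destruct (Gamma567_expl y Hy) as (Y0 & Y1 & Y2 & Y3 & Y4 & Y5 & Y6 & Ys & Yp).
  destruct Yp as [Yp|[Yp|Yp]].
  - exists 5%nat, 6%nat, 4%nat. split; [right; left; reflexivity|]. split; [lra|].
    intros z. rewrite !sqdist7_expl. cbn. rewrite Y0, Y1, Y2, Y3, Yp.
    replace (1 - y 5%nat) with (y 6%nat) by lra. ring.
  - exists 6%nat, 4%nat, 5%nat. split; [right; right; reflexivity|]. split; [lra|].
    intros z. rewrite !sqdist7_expl. cbn. rewrite Y0, Y1, Y2, Y3, Yp.
    replace (1 - y 6%nat) with (y 4%nat) by lra. ring.
  - exists 4%nat, 5%nat, 6%nat. split; [left; reflexivity|]. split; [lra|].
    intros z. rewrite !sqdist7_expl. cbn. rewrite Y0, Y1, Y2, Y3, Yp.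
    replace (1 - y 4%nat) with (y 5%nat) by lra. ring.
Qed.

Lemma edge_projection_sqdist_bound (a b c d p q r eta : R) :
  0 <= a -> 0 <= b -> 0 <= c -> 0 <= d -> 0 <= p -> 0 <= q -> 0 <= r ->
  a + b + c + d + p + q + r = 1 -> a + b + c + d + p * q * r <= eta -> eta <= 1/10000 ->
  r <= p -> r <= q ->
  a^2 + b^2 + c^2 + d^2 + 2 * ((a + b + c + d + r) / 2)^2 + r^2 <= 9 * eta.
Proof.
  intros Ha Hb Hc Hd Hp Hq Hr Hs HL He Hrp Hrq.
  assert (Hpqr : 0 <= p * q * r) by (apply Rmult_le_pos; [apply Rmult_le_pos|]; lra).
  assert (Hsq : a^2 + b^2 + c^2 + d^2 <= (a + b + c + d)^2)
    by (assert (0 <= a * b) by nra; assert (0 <= a * c) by nra; assert (0 <= a * d) by nra;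
        assert (0 <= b * c) by nra; assert (0 <= b * d) by nra; assert (0 <= c * d) by nra; lra).
  remember (a + b + c + d) as m eqn:Hmdef.
  assert (Hm : 0 <= m <= eta) by lra.
  assert (H2 : 2 * ((m + r) / 2)^2 <= m^2 + r^2) by (pose proof (pow2_ge_0 (m - r)); nra).
  assert (Hm2 : m^2 <= eta / 10000) by nra.
  assert (Hpq : p + q >= 66/100) by lra.
  assert (Hr2 : r^2 * (p + q) <= 2 * (p * q * r)).
  { assert (r * r * p <= q * r * p)
      by (apply Rmult_le_compat_r; [lra|]; apply Rmult_le_compat_r; lra).
    assert (r * r * q <= p * r * q)
      by (apply Rmult_le_compat_r; [lra|]; apply Rmult_le_compat_r; lra).
    nra. }
  assert (r^2 * (66/100) <= r^2 * (p + q)) by (apply Rmult_le_compat_l; [apply pow2_ge_0|lra]).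
  lra.
Qed.

(* [edge i j ((1 + z i - z j) / 2)] is [z] with all the mass off [{i, j}] split evenly
   between [i] and [j]. *)
Lemma sqdist7_edge_projection i j k z eta : cyclic456 i j k -> simplex7 z ->
  lyap z <= eta -> eta <= 1/10000 -> z k <= z i -> z k <= z j ->
  sqdist7 z (edge i j ((1 + z i - z j) / 2)) <= 9 * eta.
Proof.
  intros Hc Hz HL He Hki Hkj.
  destruct (simplex7_expl z Hz) as (Z0 & Z1 & Z2 & Z3 & Z4 & Z5 & Z6 & Zs). unfold lyap in HL.
  rewrite sqdist7_expl.
  destruct Hc as [Hc|[Hc|Hc]]; injection Hc as -> -> ->; cbn [edge Nat.eqb]; rewrite <- Zs;
  lazymatch type of Hki with z ?k <= z ?i => lazymatch type of Hkj with _ <= z ?j =>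
    eapply Rle_trans;
    [|apply (edge_projection_sqdist_bound (z 0%nat) (z 1%nat) (z 2%nat) (z 3%nat) (z i) (z j) (z k));
      lra];
    right; field end end.
Qed.

Lemma near_Gamma567_of_lyap_le z eta : simplex7 z -> lyap z <= eta -> eta <= 1/10000 ->
  exists y, Gamma567 y /\ sqdist7 z y <= 9 * eta.
Proof.
  intros Hz HL He.
  assert (Hmin : exists i j k, cyclic456 i j k /\ z k <= z i /\ z k <= z j).
  { destruct (Rle_or_lt (z 6%nat) (z 4%nat)); destruct (Rle_or_lt (z 6%nat) (z 5%nat));
    destruct (Rle_or_lt (z 4%nat) (z 5%nat)).
    all: first
      [ exists 4%nat, 5%nat, 6%nat; split; [left; reflexivity|lra]
      | exists 5%nat, 6%nat, 4%nat; split; [right; left; reflexivity|lra]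
      | exists 6%nat, 4%nat, 5%nat; split; [right; right; reflexivity|lra] ]. }
  destruct Hmin as (i & j & k & Hc & Hki & Hkj).
  exists (edge i j ((1 + z i - z j) / 2)). split.
  - apply (Gamma567_edge i j k); [exact Hc|].
    destruct (simplex7_expl z Hz) as (Z0 & Z1 & Z2 & Z3 & Z4 & Z5 & Z6 & Zs).
    destruct Hc as [Hc|[Hc|Hc]]; injection Hc as -> -> ->; lra.
  - exact (sqdist7_edge_projection i j k z eta Hc Hz HL He Hki Hkj).
Qed.

(* A Lebesgue-number argument on the compact edge [s \in [0,1]]. *)
Lemma edge_uniform_nbhd i j k (V : (nat -> R) -> Prop) : cyclic456 i j k -> nbhd_in_S7 Gamma567 V ->
  exists rho, 0 < rho /\ forall s, 0 <= s <= 1 ->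
    forall z, simplex7 z -> sqdist7 (edge i j s) z < rho^2 -> V z.
Proof.
  intros Hc HV.
  assert (Hr : forall s, {r : R | 0 < r /\ (0 <= s <= 1 ->
                 forall z, simplex7 z -> sqdist7 (edge i j s) z < r^2 -> V z)}).
  { intros s. apply constructive_indefinite_description.
    destruct (classic (0 <= s <= 1)) as [Hs|Hs].
    - destruct (HV _ (Gamma567_edge i j k s Hc Hs)) as [r [Hr0 Hr1]]. exists r. split; [exact Hr0|].
      intros _ z Hz Hd. apply Hr1; [exact Hz|]. apply dist7_lt_of_sqdist7; assumption.
    - exists 1. split; [lra|tauto]. }
  set (delta s := mkposreal (proj1_sig (Hr s) / 4) ltac:(destruct (proj2_sig (Hr s)); lra)).
  destruct (compactness_value_1d 0 1 delta) as [d Hd].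
  exists d. split; [apply cond_pos|]. intros s Hs z Hz Hsz.
  apply NNPP. intros HVz. apply (Hd s Hs). intros [t [Ht [Hst Hdt]]].
  apply HVz. destruct (proj2_sig (Hr t)) as [Hr0 Hr1]. apply (Hr1 Ht z Hz).
  change (Rabs (s - t) < proj1_sig (Hr t) / 4) in Hst. change (d <= proj1_sig (Hr t) / 4) in Hdt.
  set (rt := proj1_sig (Hr t)) in *.
  pose proof (sqdist7_le_2 (edge i j t) (edge i j s) z) as Htri.
  rewrite (sqdist7_edge i j k t s Hc) in Htri.
  apply Rabs_def2 in Hst. pose proof (cond_pos d).
  assert ((t - s)^2 < (rt / 4)^2) by nra.
  assert (d^2 <= (rt / 4)^2) by nra.
  nra.
Qed.

Lemma Gamma567_uniform_nbhd (V : (nat -> R) -> Prop) : nbhd_in_S7 Gamma567 V ->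
  exists rho, 0 < rho /\ forall y, Gamma567 y -> forall z, simplex7 z -> sqdist7 y z < rho^2 -> V z.
Proof.
  intros HV.
  destruct (edge_uniform_nbhd 4 5 6 V (or_introl eq_refl) HV) as [r1 [Hr1 H1]].
  destruct (edge_uniform_nbhd 5 6 4 V (or_intror (or_introl eq_refl)) HV) as [r2 [Hr2 H2]].
  destruct (edge_uniform_nbhd 6 4 5 V (or_intror (or_intror eq_refl)) HV) as [r3 [Hr3 H3]].
  set (rho := Rmin r1 (Rmin r2 r3)).
  assert (Hrho : 0 < rho /\ rho <= r1 /\ rho <= r2 /\ rho <= r3)
    by (unfold rho, Rmin; repeat destruct Rle_dec; lra).
  exists rho. split; [apply Hrho|]. intros y Hy z Hz Hyz.
  destruct (Gamma567_on_edge y Hy) as (i & j & k & Hc & Hyi & Hedge).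
  rewrite <- Hedge in Hyz.
  assert (Hpow : forall r, rho <= r -> rho^2 <= r^2) by (intros r Hr; apply pow_incr; lra).
  destruct Hc as [Hc|[Hc|Hc]]; injection Hc as -> -> ->;
    [apply (H1 (y 4%nat)) | apply (H2 (y 5%nat)) | apply (H3 (y 6%nat))]; try assumption;
    apply (Rlt_le_trans _ _ _ Hyz), Hpow; lra.
Qed.

(** * Replicator solutions *)

Lemma filterlim_lyap {T : Type} (F : (T -> Prop) -> Prop) {FF : Filter F}
    (y : T -> nat -> R) (l : nat -> R) :
  (forall i, (i < 7)%nat -> filterlim (fun s => y s i) F (locally (l i))) ->
  filterlim (fun s => lyap (y s)) F (locally (lyap l)).
Proof.
  intros H. unfold lyap.
  repeat first [exact FF | apply filterlim_Rplus | apply filterlim_Rmult | apply H; lia].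
Qed.

Lemma is_derive_lyap (y : R -> nat -> R) (dy : nat -> R) (t : R) :
  (forall i, (i < 7)%nat -> is_derive (fun s => y s i) t (dy i)) ->
  is_derive (fun s => lyap (y s)) t
    (dy 0%nat + dy 1%nat + dy 2%nat + dy 3%nat
     + ((dy 4%nat * y t 5%nat + y t 4%nat * dy 5%nat) * y t 6%nat + y t 4%nat * y t 5%nat * dy 6%nat)).
Proof.
  intros H. unfold lyap.
  apply (is_derive_plus (fun s => y s 0%nat + y s 1%nat + y s 2%nat + y s 3%nat)
                        (fun s => y s 4%nat * y s 5%nat * y s 6%nat)).
  - apply (is_derive_plus (fun s => y s 0%nat + y s 1%nat + y s 2%nat) (fun s => y s 3%nat));
      [|apply H; lia].
    apply (is_derive_plus (fun s => y s 0%nat + y s 1%nat) (fun s => y s 2%nat)); [|apply H; lia].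
    apply (is_derive_plus (fun s => y s 0%nat) (fun s => y s 1%nat)); apply H; lia.
  - apply (is_derive_Rmult (fun s => y s 4%nat * y s 5%nat) (fun s => y s 6%nat)); [|apply H; lia].
    apply (is_derive_Rmult (fun s => y s 4%nat) (fun s => y s 5%nat)); apply H; lia.
Qed.

Lemma replicator_sum eps y :
  sum_f_R0 (replicator eps y) 6 = avg_payoff eps y * (1 - sum_f_R0 y 6).
Proof. unfold replicator, avg_payoff. simpl. ring. Qed.

Lemma Umat_abs_le eps i j : 0 < eps < 1 -> Rabs (Umat eps i j) <= 10.
Proof.
  intros He. destruct i as [|[|[|[|[|[|[|i]]]]]]]; destruct j as [|[|[|[|[|[|[|j]]]]]]];
    simpl; unfold Rabs; destruct Rcase_abs; lra.
Qed.

Lemma Ux_abs_le eps y i : 0 < eps < 1 -> (forall j, (j < 7)%nat -> Rabs (y j) <= 2) ->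
  Rabs (Ux eps y i) <= 140.
Proof.
  intros He Hy. unfold Ux. eapply Rle_trans; [apply sum_f_R0_triangle|].
  eapply Rle_trans; [apply (sum_Rle _ (fun _ => 10 * 2))|rewrite sum_cte; simpl; lra].
  intros j Hj. rewrite Rabs_mult.
  apply Rmult_le_compat; [apply Rabs_pos|apply Rabs_pos|apply Umat_abs_le, He|apply Hy; lia].
Qed.

Lemma avg_payoff_abs_le eps y : 0 < eps < 1 -> (forall j, (j < 7)%nat -> Rabs (y j) <= 2) ->
  Rabs (avg_payoff eps y) <= 1960.
Proof.
  intros He Hy. unfold avg_payoff. eapply Rle_trans; [apply sum_f_R0_triangle|].
  eapply Rle_trans; [apply (sum_Rle _ (fun _ => 2 * 140))|rewrite sum_cte; simpl; lra].
  intros j Hj. rewrite Rabs_mult.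
  apply Rmult_le_compat; [apply Rabs_pos|apply Rabs_pos|apply Hy; lia|apply Ux_abs_le; assumption].
Qed.

Section ReplicatorSolution.

Variables (eps : R) (x : R -> nat -> R).
Hypothesis Heps : 0 < eps <= 1/200.
Hypothesis Hsol : replicator_solution eps x.

Lemma solution_continuous t i : 0 < t -> (i < 7)%nat ->
  filterlim (fun s => x s i) (locally t) (locally (x t i)).
Proof. intros Ht Hi. exact (is_derive_continuous _ _ _ (proj1 Hsol t Ht i Hi)). Qed.

Lemma solution_right_continuous t i : 0 <= t -> (i < 7)%nat ->
  filterlim (fun s => x s i) (at_right t) (locally (x t i)).
Proof.
  intros Ht Hi. destruct (Req_dec t 0) as [->|Ht0]; [exact (proj2 Hsol i Hi)|].
  apply filterlim_within_of_locally, solution_continuous; [lra|exact Hi].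
Qed.

Lemma is_derive_lyap_solution t : 0 < t ->
  is_derive (fun s => lyap (x s)) t (lyap_derivative eps (x t)).
Proof. intros Ht. apply is_derive_lyap. intros i Hi. exact (proj1 Hsol t Ht i Hi). Qed.

Lemma solution_sum_stays_one t d K : 0 <= t -> sum_f_R0 (x t) 6 = 1 ->
  (forall s, t < s < t + d -> - K <= avg_payoff eps (x s)) ->
  forall s, t < s < t + d -> sum_f_R0 (x s) 6 = 1.
Proof.
  intros Ht Hsum Havg.
  set (S s := sum_f_R0 (x s) 6 + -1).
  assert (HdS : forall s, 0 < s -> is_derive S s (- avg_payoff eps (x s) * S s)).
  { intros s Hs. unfold S. replace (- avg_payoff eps (x s) * (sum_f_R0 (x s) 6 + -1))
      with (sum_f_R0 (replicator eps (x s)) 6 + 0) by (rewrite replicator_sum; ring).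
    apply (is_derive_plus (fun s => sum_f_R0 (x s) 6) (fun _ => -1));
      [|exact (is_derive_const _ _)].
    apply is_derive_sum_f_R0. intros i Hi. apply (proj1 Hsol s Hs); lia. }
  assert (Hu : forall s, t < s < t + d -> S s * S s = 0).
  { apply (gronwall_zero _
      (fun s => (- avg_payoff eps (x s) * S s) * S s + S s * (- avg_payoff eps (x s) * S s)) t d (2 * K)).
    - intros s Hs. apply is_derive_Rmult; apply HdS; lra.
    - intros s Hs. pose proof (Havg s Hs). pose proof (Rle_0_sqr (S s)). unfold Rsqr in *. nra.
    - intros s _. apply Rle_0_sqr.
    - replace 0 with (S t * S t) by (unfold S; rewrite Hsum; ring).
      assert (HS : filterlim S (at_right t) (locally (S t))).
      { apply (filterlim_Rplus _ (fun s => sum_f_R0 (x s) 6) (fun _ => -1)); [|apply filterlim_const].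
        apply (filterlim_sum_f_R0 (at_right t)). intros i Hi.
        apply solution_right_continuous; [exact Ht|lia]. }
      exact (filterlim_Rmult _ S S _ _ HS HS). }
  intros s Hs. pose proof (Hu s Hs) as H0. apply Rmult_integral in H0. unfold S in H0. lra.
Qed.

Lemma solution_zero_stays_zero t d K i : 0 <= t -> (i < 7)%nat -> x t i = 0 ->
  (forall s, t < s < t + d -> Ux eps (x s) i - avg_payoff eps (x s) <= K) ->
  forall s, t < s < t + d -> x s i = 0.
Proof.
  intros Ht Hi Hx0 Hgap.
  assert (Hu : forall s, t < s < t + d -> x s i * x s i = 0).
  { apply (gronwall_zero _ (fun s => replicator eps (x s) i * x s i + x s i * replicator eps (x s) i)
             t d (2 * K)).
    - intros s Hs. apply (is_derive_Rmult (fun s => x s i) (fun s => x s i));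
        (apply (proj1 Hsol); [lra|exact Hi]).
    - intros s Hs. unfold replicator. pose proof (Hgap s Hs). pose proof (Rle_0_sqr (x s i)).
      unfold Rsqr in *. nra.
    - intros s _. apply Rle_0_sqr.
    - replace 0 with (x t i * x t i) by (rewrite Hx0; ring).
      apply (filterlim_Rmult (at_right t)); apply solution_right_continuous; assumption. }
  intros s Hs. pose proof (Hu s Hs) as H0. apply Rmult_integral in H0. lra.
Qed.

Lemma lyap_exp_nonincreasing t d : 0 <= t ->
  (forall s, t < s < t + d -> simplex7 (x s) /\ lyap (x s) < 1/10000) ->
  forall s, t < s < t + d -> lyap (x s) * exp (1/50 * s) <= lyap (x t) * exp (1/50 * t).
Proof.
  intros Ht Hin.
  apply (nonpos_derive_le_right_limit _
           (fun s => lyap_derivative eps (x s) * exp (1/50 * s) + lyap (x s) * (1/50 * exp (1/50 * s)))).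
  - intros s Hs. apply (is_derive_Rmult (fun s => lyap (x s)) (fun s => exp (1/50 * s)));
      [apply is_derive_lyap_solution; lra|apply is_derive_exp_scal].
  - intros s Hs. destruct (Hin s Hs) as [Hx HL].
    pose proof (lyap_derivative_le eps (x s) Heps Hx HL). pose proof (exp_pos (1/50 * s)). nra.
  - apply (filterlim_Rmult (at_right t)).
    + apply (filterlim_lyap (at_right t)). intros i Hi. apply solution_right_continuous; assumption.
    + apply filterlim_within_of_locally, (is_derive_continuous _ _ _ (is_derive_exp_scal _ t)).
Qed.

Lemma solution_eventually_near t : 0 <= t -> lyap (x t) < 1/10000 ->
  exists d, 0 < d /\ forall s, t < s < t + d ->
    (forall i, (i < 7)%nat -> x t i - 1 < x s i < x t i + 1 /\ (0 < x t i -> 0 < x s i))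
    /\ lyap (x s) < 1/10000.
Proof.
  intros Ht HL.
  assert (Hcoord : at_right t (fun s => forall i, (i < 7)%nat ->
                     x t i - 1 < x s i < x t i + 1 /\ (0 < x t i -> 0 < x s i))).
  { apply (filter_forall_lt (at_right t)). intros i Hi.
    pose proof (solution_right_continuous t i Ht Hi) as Hc.
    apply filter_and; [apply filter_and|].
    - apply (filterlim_eventually_gt _ _ _ _ Hc). lra.
    - apply (filterlim_eventually_lt _ _ _ _ Hc). lra.
    - destruct (Rlt_or_le 0 (x t i)) as [Hp|Hp].
      + apply (filter_imp (fun s => 0 < x s i)); [tauto|exact (filterlim_eventually_gt _ _ _ _ Hc Hp)].
      + apply filter_forall. intros s Hs. lra. }
  assert (Hlyap : at_right t (fun s => lyap (x s) < 1/10000)).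
  { apply (filterlim_eventually_lt _ _ (lyap (x t))); [|exact HL].
    apply (filterlim_lyap (at_right t)). intros i Hi. apply solution_right_continuous; assumption. }
  exact (at_right_ex_interval t _ (filter_and _ _ Hcoord Hlyap)).
Qed.

Lemma solution_invariant_extends_right c t : 0 <= t -> c < 1/10000 ->
  simplex7 (x t) -> lyap (x t) * exp (1/50 * t) <= c ->
  exists d, 0 < d /\ forall s, t <= s < t + d ->
    simplex7 (x s) /\ lyap (x s) * exp (1/50 * s) <= c.
Proof.
  intros Ht Hc Hxt HPhi.
  assert (HLt : lyap (x t) < 1/10000).
  { pose proof (lyap_nonneg _ Hxt). pose proof (exp_ineq1_le (1/50 * t)). nra. }
  destruct (solution_eventually_near t Ht HLt) as [d [Hd Hnear]].
  assert (Hxt01 : forall j, (j < 7)%nat -> 0 <= x t j <= 1).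
  { intros j Hj. destruct (simplex7_expl _ Hxt) as (H0 & H1 & H2 & H3 & H4 & H5 & H6 & Hs).
    destruct j as [|[|[|[|[|[|[|j]]]]]]]; try lia; lra. }
  assert (Hbound : forall s, t < s < t + d -> forall j, (j < 7)%nat -> Rabs (x s j) <= 2).
  { intros s Hs j Hj. destruct (Hnear s Hs) as [Hn _]. destruct (Hn j Hj) as [Hj' _].
    pose proof (Hxt01 j Hj). unfold Rabs; destruct Rcase_abs; lra. }
  assert (Heps1 : 0 < eps < 1) by lra.
  assert (Hsum : forall s, t < s < t + d -> sum_f_R0 (x s) 6 = 1).
  { apply (solution_sum_stays_one t d 1960 Ht (proj2 Hxt)). intros s Hs.
    pose proof (avg_payoff_abs_le eps _ Heps1 (Hbound s Hs)) as Ha. apply Rabs_le_between in Ha. lra. }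
  assert (Hnonneg : forall s, t < s < t + d -> forall i, (i < 7)%nat -> 0 <= x s i).
  { intros s Hs i Hi. destruct (Rle_lt_or_eq_dec 0 (x t i) (proj1 (Hxt01 i Hi))) as [Hp|Hz].
    - destruct (Hnear s Hs) as [Hn _]. apply Rlt_le, (proj2 (Hn i Hi) Hp).
    - right. symmetry. apply (solution_zero_stays_zero t d 2100 i Ht Hi (eq_sym Hz)); [|exact Hs].
      intros s' Hs'. pose proof (Ux_abs_le eps _ i Heps1 (Hbound s' Hs')) as H1.
      pose proof (avg_payoff_abs_le eps _ Heps1 (Hbound s' Hs')) as H2.
      apply Rabs_le_between in H1. apply Rabs_le_between in H2. lra. }
  assert (Hsimplex : forall s, t < s < t + d -> simplex7 (x s))
    by (intros s Hs; split; [apply Hnonneg|apply Hsum]; exact Hs).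
  exists d. split; [exact Hd|]. intros s Hs. destruct (Req_dec s t) as [->|Hne]; [split; assumption|].
  assert (Hs' : t < s < t + d) by lra. split; [apply Hsimplex, Hs'|].
  pose proof (lyap_exp_nonincreasing t d Ht
                (fun s Hs => conj (Hsimplex s Hs) (proj2 (Hnear s Hs))) s Hs').
  lra.
Qed.

Lemma solution_invariant_closed c t : 0 < t ->
  (forall s, 0 <= s < t -> simplex7 (x s) /\ lyap (x s) * exp (1/50 * s) <= c) ->
  simplex7 (x t) /\ lyap (x t) * exp (1/50 * t) <= c.
Proof.
  intros Ht Hbelow.
  assert (Hev : at_left t (fun s => simplex7 (x s) /\ lyap (x s) * exp (1/50 * s) <= c))
    by (apply (filter_imp (fun s => 0 <= s < t)); [exact Hbelow|apply at_left_interval, Ht]).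
  assert (Hx : forall i, (i < 7)%nat -> filterlim (fun s => x s i) (at_left t) (locally (x t i)))
    by (intros i Hi; apply filterlim_within_of_locally, solution_continuous; assumption).
  assert (Hsum : filterlim (fun s => sum_f_R0 (x s) 6) (at_left t) (locally (sum_f_R0 (x t) 6)))
    by (apply (filterlim_sum_f_R0 (at_left t)); intros i Hi; apply Hx; lia).
  split; [split|].
  - intros i Hi. apply (filterlim_ge (at_left t) _ _ _ (Hx i Hi)).
    apply (filter_imp _ _ (fun s Hs => proj1 (proj1 Hs) i Hi) Hev).
  - assert (Hev1 : at_left t (fun s => sum_f_R0 (x s) 6 = 1))
      by exact (filter_imp _ _ (fun s Hs => proj2 (proj1 Hs)) Hev).
    apply Rle_antisym;
      [apply (filterlim_le (at_left t) _ _ _ Hsum)|apply (filterlim_ge (at_left t) _ _ _ Hsum)];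
      (apply (filter_imp (fun s => sum_f_R0 (x s) 6 = 1)); [intros s Hs; lra|exact Hev1]).
  - apply (filterlim_le (at_left t) (fun s => lyap (x s) * exp (1/50 * s))).
    + apply (filterlim_Rmult (at_left t)).
      * apply (filterlim_lyap (at_left t)). exact Hx.
      * apply filterlim_within_of_locally, (is_derive_continuous _ _ _ (is_derive_exp_scal _ t)).
    + apply (filter_imp _ _ (fun s Hs => proj2 Hs) Hev).
Qed.

Lemma solution_invariant : simplex7 (x 0) -> lyap (x 0) < 1/10000 ->
  forall t, 0 <= t -> simplex7 (x t) /\ lyap (x t) * exp (1/50 * t) <= lyap (x 0).
Proof.
  intros Hx0 HL0. apply continuous_induction. intros t Ht Hbelow.
  assert (Hinv : simplex7 (x t) /\ lyap (x t) * exp (1/50 * t) <= lyap (x 0)).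
  { destruct (Req_dec t 0) as [->|Ht0].
    - split; [exact Hx0|]. rewrite Rmult_0_r, exp_0, Rmult_1_r. lra.
    - apply solution_invariant_closed; [lra|exact Hbelow]. }
  exact (solution_invariant_extends_right _ t Ht HL0 (proj1 Hinv) (proj2 Hinv)).
Qed.

Lemma solution_lyap_bounds : simplex7 (x 0) -> lyap (x 0) < 1/10000 ->
  forall t, 0 <= t -> simplex7 (x t) /\ lyap (x t) <= lyap (x 0) /\ t * lyap (x t) <= 50 * lyap (x 0).
Proof.
  intros Hx0 HL0 t Ht. destruct (solution_invariant Hx0 HL0 t Ht) as [Hxt Hdecay].
  pose proof (lyap_nonneg _ Hxt). pose proof (exp_ineq1_le (1/50 * t)).
  split; [exact Hxt|split; nra].
Qed.

Lemma solution_converges_to_Gamma567 : simplex7 (x 0) -> lyap (x 0) < 1/10000 ->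
  converges_to_set x Gamma567.
Proof.
  intros Hx0 HL0 e He. exists (/ (20 * e^2)). intros t Ht.
  assert (He2 : 0 < e^2) by (apply pow_lt; lra).
  assert (Hte : 1 <= t * (20 * e^2)).
  { apply (Rmult_le_reg_r (/ (20 * e^2))); [apply Rinv_0_lt_compat; lra|].
    rewrite Rmult_assoc, Rinv_r, Rmult_1_l, Rmult_1_r by lra. exact Ht. }
  assert (Ht0 : 0 <= t) by (pose proof (Rinv_0_lt_compat (20 * e^2) ltac:(lra)); lra).
  destruct (solution_lyap_bounds Hx0 HL0 t Ht0) as (Hxt & HLt & HtL).
  pose proof (lyap_nonneg _ Hxt).
  assert (HLe : lyap (x t) <= e^2 / 10) by nra.
  set (eta := Rmin (1/10000) (e^2 / 10)).
  assert (Heta : lyap (x t) <= eta /\ eta <= 1/10000 /\ eta <= e^2 / 10)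
    by (unfold eta, Rmin; destruct Rle_dec; lra).
  destruct (near_Gamma567_of_lyap_le (x t) eta Hxt (proj1 Heta) (proj1 (proj2 Heta))) as [y [Hy Hsq]].
  exists y. split; [exact Hy|]. apply dist7_lt_of_sqdist7; lra.
Qed.

End ReplicatorSolution.

Lemma lyap_sublevel_in_nbhd (V : (nat -> R) -> Prop) : nbhd_in_S7 Gamma567 V ->
  exists eta, 0 < eta <= 1/10000 /\ forall z, simplex7 z -> lyap z < eta -> V z.
Proof.
  intros HV. destruct (Gamma567_uniform_nbhd V HV) as [rho [Hrho Hnear]].
  assert (Hrho2 : 0 < rho^2) by (apply pow_lt; lra).
  set (eta := Rmin (1/10000) (rho^2 / 10)).
  assert (Heta : 0 < eta <= 1/10000 /\ eta <= rho^2 / 10)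
    by (unfold eta, Rmin; destruct Rle_dec; lra).
  exists eta. split; [apply Heta|]. intros z Hz HL.
  destruct (near_Gamma567_of_lyap_le z eta Hz ltac:(lra) ltac:(lra)) as [y [Hy Hzy]].
  apply (Hnear y Hy z Hz). rewrite sqdist7_sym. lra.
Qed.

Theorem proposition8 :
  exists eps0, 0 < eps0 /\
    forall eps, 0 < eps -> eps < eps0 ->
      asymptotically_stable eps Gamma567.
Proof.
  exists (1/200). split; [lra|]. intros eps Heps0 Heps1.
  assert (Heps : 0 < eps <= 1/200) by lra.
  split.
  - intros V HV. destruct (lyap_sublevel_in_nbhd V HV) as [eta [Heta HV_eta]].
    exists (fun z => simplex7 z /\ lyap z < eta). split; [apply lyap_lt_nbhd; lra|split].
    + intros z Hz [_ HL]. exact (HV_eta z Hz HL).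
    + intros x Hsol Hx0 [_ HL0] t Ht.
      destruct (solution_lyap_bounds eps x Heps Hsol Hx0 ltac:(lra) t Ht) as (Hxt & HLt & _).
      apply HV_eta; [exact Hxt|lra].
  - exists (fun z => simplex7 z /\ lyap z < 1/10000). split; [apply lyap_lt_nbhd; lra|].
    intros x Hsol Hx0 [_ HL0]. exact (solution_converges_to_Gamma567 eps x Heps Hsol Hx0 HL0).
Qed.
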